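(* Let $(W,R)$ be an $L5$-frame, let $g\colon V\to\mathrm{Pow}(W)$ be an assignment in $(W,R)$, and let $w_T\in W$ be an $R$-maximal element of $W$. Then there exist an $L5$-model $\mathcal{M}$ and an assignment $\gamma\colon V\to M$ such that for all formulas $\varphi$: $$(\mathcal{M},\gamma)\vDash\varphi\iff (w_T,g)\vDash\varphi.$$
   Context: Formulas are built from a countable set $V$ of propositional variables using $\wedge,\vee,\rightarrow,\bot$ and the unary modal operator $\square$; $\top$ abbreviates $\bot\rightarrow\bot$. An $L5$-frame is a pair $(W,R)$ with the following properties: - $W$ is a non-empty set; - $R$ is a partial order on $W$; - there is an $R$-smallest element $w_B$ (the bottom world); - every $R$-chain has an upper bound in $W$. An assignment in $(W,R)$ is a map $g\colon V\to\mathrm{Pow}(W)$ with $wRw'$ and $w\in g(x)$ implying $w'\in g(x)$. Kripke satisfaction is defined as follows: - $(w,g)\nvDash\bot$; - $(w,g)\vDash x$ iff $w\in g(x)$; - $\vee,\wedge$ are evaluated pointwise; - $(w,g)\vDash\varphi\rightarrow\psi$ iff for all $w'$ with $wRw'$, $(w',g)\vDash\varphi$ implies $(w',g)\vDash\psi$; - $(w,g)\vDash\square\varphi$ iff $(w_B,g)\vDash\varphi$. An $L5$-model is a structure $\mathcal{M}=(M,\mathit{TRUE},f_\bot,f_\top,f_\rightarrow,f_\vee,f_\wedge,f_\square)$ such that $(M,f_\bot,f_\top,f_\rightarrow,f_\vee,f_\wedge)$ is a Heyting algebra (lattice order $\le$). Moreover, $\mathit{TRUE}\subseteq M$ is an ultrafilter,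 and $f_\square\colon M\to M$ satisfies, for all $m,m',m''\in M$: (i) $f_\square(m)\le m$; (ii) $f_\square(f_\rightarrow(m,m'))\le f_\rightarrow(f_\square(f_\rightarrow(m',m'')),f_\square(f_\rightarrow(m,m'')))$; (iii) $f_\square(f_\vee(m,m'))\le f_\vee(f_\square(m),f_\square(m'))$; (iv) $f_\square(m)\in\mathit{TRUE}$ iff $m=f_\top$; (v) $f_\square(m)=f_\top$ if $m=f_\top$, and $f_\square(m)=f_\bot$ otherwise. An assignment $\gamma\colon V\to M$ extends to all formulas by: - $\gamma(\bot)=f_\bot$; - $\gamma(\square\varphi)=f_\square(\gamma(\varphi))$; - $\gamma(\varphi*\psi)=f_*(\gamma(\varphi),\gamma(\psi))$ for $*\in\{\vee,\wedge,\rightarrow\}$. Satisfaction is $(\mathcal{M},\gamma)\vDash\varphi$ iff $\gamma(\varphi)\in\mathit{TRUE}$. *)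

Definition var := nat.

Inductive form : Type :=
| FBot : form
| FVar : var -> form
| FAnd : form -> form -> form
| FOr  : form -> form -> form
| FImp : form -> form -> form
| FBox : form -> form.

Definition FTop : form := FImp FBot FBot.

Definition is_chain {W : Type} (R : W -> W -> Prop) (C : W -> Prop) : Prop :=
  forall x y, C x -> C y -> R x y \/ R y x.

Record L5Frame : Type := {
  fW : Type;
  fR : fW -> fW -> Prop;
  fW_nonempty : inhabited fW;
  fR_refl : forall w, fR w w;
  fR_trans : forall u v w, fR u v -> fR v w -> fR u w;
  fR_antisym : forall u v, fR u v -> fR v u -> u = v;
  fwB : fW;
  fwB_least : forall w, fR fwB w;
  f_chain_ub : forall C : fW -> Prop, is_chain fR C ->
                 exists u, forall x, C x -> fR x u
}.

Definition assignment (F : L5Frame) (g : var -> fW F -> Prop) : Prop :=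
  forall x w w', fR F w w' -> g x w -> g x w'.

Fixpoint ksat (F : L5Frame) (g : var -> fW F -> Prop) (w : fW F) (phi : form)
  : Prop :=
  match phi with
  | FBot => False
  | FVar x => g x w
  | FAnd a b => ksat F g w a /\ ksat F g w b
  | FOr a b => ksat F g w a \/ ksat F g w b
  | FImp a b => forall w', fR F w w' -> ksat F g w' a -> ksat F g w' b
  | FBox a => ksat F g (fwB F) a
  end.

Definition R_maximal (F : L5Frame) (w : fW F) : Prop :=
  forall w', fR F w w' -> w' = w.

(** The Heyting algebra is given equationally as a bounded
    lattice (f_bot, f_top, f_vee, f_wedge) with lattice order
    m <= m' :<-> f_wedge m m' = m, and f_imp the relative
    pseudocomplement: c /\ a <= b  iff  c <= a -> b. *)
Record L5Model : Type := {
  M : Type;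
  TRUE : M -> Prop;
  f_bot : M;
  f_top : M;
  f_imp : M -> M -> M;
  f_vee : M -> M -> M;
  f_wedge : M -> M -> M;
  f_box : M -> M;
  vee_comm : forall a b, f_vee a b = f_vee b a;
  wedge_comm : forall a b, f_wedge a b = f_wedge b a;
  vee_assoc : forall a b c, f_vee a (f_vee b c) = f_vee (f_vee a b) c;
  wedge_assoc : forall a b c, f_wedge a (f_wedge b c) = f_wedge (f_wedge a b) c;
  vee_absorb : forall a b, f_vee a (f_wedge a b) = a;
  wedge_absorb : forall a b, f_wedge a (f_vee a b) = a;
  bot_least : forall a, f_wedge f_bot a = f_bot;
  top_greatest : forall a, f_wedge a f_top = a;
  imp_adj : forall a b c,
      f_wedge (f_wedge c a) b = f_wedge c a <-> f_wedge c (f_imp a b) = c;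
  (* TRUE is an ultrafilter (maximal proper filter) *)
  TRUE_top : TRUE f_top;
  TRUE_up : forall a b, TRUE a -> f_wedge a b = a -> TRUE b;
  TRUE_wedge : forall a b, TRUE a -> TRUE b -> TRUE (f_wedge a b);
  TRUE_proper : ~ TRUE f_bot;
  TRUE_max : forall F : M -> Prop,
      F f_top ->
      (forall a b, F a -> f_wedge a b = a -> F b) ->
      (forall a b, F a -> F b -> F (f_wedge a b)) ->
      ~ F f_bot ->
      (forall a, TRUE a -> F a) ->
      forall a, F a -> TRUE a;
  box_i : forall m, f_wedge (f_box m) m = f_box m;
  box_ii : forall m m' m'',
      let l := f_box (f_imp m m') in
      let r := f_imp (f_box (f_imp m' m'')) (f_box (f_imp m m'')) in
      f_wedge l r = l;
  box_iii : forall m m',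
      let l := f_box (f_vee m m') in
      f_wedge l (f_vee (f_box m) (f_box m')) = l;
  box_iv : forall m, TRUE (f_box m) <-> m = f_top;
  box_v : forall m, (m = f_top -> f_box m = f_top) /\
                    (m <> f_top -> f_box m = f_bot)
}.

Fixpoint mval (Mo : L5Model) (gamma : var -> M Mo) (phi : form) : M Mo :=
  match phi with
  | FBot => f_bot Mo
  | FVar x => gamma x
  | FAnd a b => f_wedge Mo (mval Mo gamma a) (mval Mo gamma b)
  | FOr a b => f_vee Mo (mval Mo gamma a) (mval Mo gamma b)
  | FImp a b => f_imp Mo (mval Mo gamma a) (mval Mo gamma b)
  | FBox a => f_box Mo (mval Mo gamma a)
  end.

Definition msat (Mo : L5Model) (gamma : var -> M Mo) (phi : form) : Prop :=
  TRUE Mo (mval Mo gamma phi).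

From Stdlib Require Import Classical FunctionalExtensionality PropExtensionality ProofIrrelevance.

(* The model is the Heyting algebra of upsets of the frame, with TRUE the
   principal filter of the upsets containing [wT] (an ultrafilter because [wT]
   is maximal) and box sending an upset to the full or empty set according to
   whether it contains the bottom world; an upset containing the bottom world is
   everything, so this box is the two-valued one required by (v).  The value of
   a formula is then its Kripke truth set, and evaluating at [wT] gives the
   theorem. *)

Section UpsetAlgebra.
Variable F : L5Frame.

Definition is_upset (U : fW F -> Prop) : Prop :=
  forall w w', fR F w w' -> U w -> U w'.

Definition upset : Type := {U : fW F -> Prop | is_upset U}.

Definition upset_mem (a : upset) : fW F -> Prop := proj1_sig a.
Coercion upset_mem : upset >-> Funclass.

Lemma upset_closed (a : upset) w w' : fR F w w' -> a w -> a w'.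
Proof. exact (proj2_sig a w w'). Qed.

Lemma upset_ext (a b : upset) : (forall w, a w <-> b w) -> a = b.
Proof.
  destruct a as [U HU], b as [V HV]; unfold upset_mem; simpl; intro Hab.
  assert (U = V) as ->.
  { apply functional_extensionality; intro w; apply propositional_extensionality, Hab. }
  f_equal; apply proof_irrelevance.
Qed.

Lemma upset_eq_pointwise (a b : upset) : a = b -> forall w, a w <-> b w.
Proof. intros ->; tauto. Qed.

Lemma upset_bottom_full (a : upset) w : a (fwB F) -> a w.
Proof. apply upset_closed, fwB_least. Qed.

Program Definition ubot : upset := fun _ => False.
Next Obligation. intros w w' _ H; exact H. Qed.

Program Definition utop : upset := fun _ => True.
Next Obligation. intros w w' _ H; exact H. Qed.

Program Definition uand (a b : upset) : upset := fun w => a w /\ b w.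
Next Obligation. intros w w' Hww' [Ha Hb]; eauto using upset_closed. Qed.

Program Definition uor (a b : upset) : upset := fun w => a w \/ b w.
Next Obligation. intros w w' Hww' [Ha | Hb]; eauto using upset_closed. Qed.

Program Definition uimp (a b : upset) : upset :=
  fun w => forall w', fR F w w' -> a w' -> b w'.
Next Obligation. intros w w' Hww' H w'' Hw'w''; apply H; eapply fR_trans; eauto. Qed.

Program Definition ubox (a : upset) : upset := fun _ => a (fwB F).
Next Obligation. intros w w' _ H; exact H. Qed.

Lemma uand_eq_l (a b : upset) : uand a b = a <-> forall w, a w -> b w.
Proof.
  split.
  - intros Hab w Ha; apply (upset_eq_pointwise _ _ Hab w) in Ha; apply Ha.
  - intro Hab; apply upset_ext; simpl; intro w; split; [tauto | auto].
Qed.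

Lemma uimp_adj (a b c : upset) :
  uand (uand c a) b = uand c a <-> uand c (uimp a b) = c.
Proof.
  rewrite !uand_eq_l; simpl; split.
  - intros Hcab w Hc w' Hww' Ha; apply Hcab; eauto using upset_closed.
  - intros Hc w [Hcw Ha]; apply (Hc w Hcw w); auto using fR_refl.
Qed.

Lemma ubox_two_valued (a : upset) :
  (a = utop -> ubox a = utop) /\ (a <> utop -> ubox a = ubot).
Proof.
  split.
  - intros ->; apply upset_ext; simpl; tauto.
  - intro Ha; apply upset_ext; simpl; intro w; split; [|tauto]; intro HaB.
    apply Ha, upset_ext; simpl; split; auto using upset_bottom_full.
Qed.

Variable wT : fW F.
Hypothesis HwT : R_maximal F wT.

Program Definition usingleton : upset := fun w => w = wT.
Next Obligation. intros w w' Hww' ->; exact (HwT w' Hww'). Qed.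

(* A proper filter containing the singleton [{wT}] cannot contain an upset
   missing [wT], since their meet is empty. *)
Lemma principal_filter_maximal (P : upset -> Prop) :
  (forall a b, P a -> P b -> P (uand a b)) -> ~ P ubot ->
  (forall a : upset, a wT -> P a) -> forall a : upset, P a -> a wT.
Proof.
  intros Hmeet Hproper Hsup a Ha; apply NNPP; intro HaT.
  apply Hproper.
  replace ubot with (uand a usingleton).
  - apply Hmeet; [exact Ha | apply Hsup; reflexivity].
  - apply upset_ext; simpl; intro w; split; [intros [Hw ->]; auto | tauto].
Qed.

Definition upset_model : L5Model.
Proof.
  refine (@Build_L5Model upset (fun a => a wT) ubot utop uimp uor uand ubox
    _ _ _ _ _ _ _ _ uimp_adj _ _ _ _ _ _ _ _ _ ubox_two_valued).
  (* the lattice laws and box condition (iii) hold pointwise *)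
  all: try (intros; apply upset_ext; simpl; tauto).
  - exact I.
  - intros a b Ha Hab; exact (proj1 (uand_eq_l a b) Hab wT Ha).
  - intros a b Ha Hb; split; assumption.
  - simpl; tauto.
  - intros P _ _ Hmeet Hproper Hsup; exact (principal_filter_maximal P Hmeet Hproper Hsup).
  - intro a; apply uand_eq_l; simpl; intros w Ha; exact (upset_bottom_full a w Ha).
  - intros a a' a''; cbv zeta; apply uand_eq_l; simpl.
    intros w Haa' w' _ Ha'a'' v Hv Ha; apply Ha'a''; auto.
  - intro a; split.
    + intro HaB; apply upset_ext; simpl; split; auto using upset_bottom_full.
    + intros ->; exact I.
Defined.

Variable g : var -> fW F -> Prop.
Hypothesis Hg : assignment F g.

Definition upset_val (x : var) : upset := exist is_upset (g x) (Hg x).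

Lemma upset_model_truth (phi : form) (w : fW F) :
  upset_mem (mval upset_model upset_val phi) w <-> ksat F g w phi.
Proof.
  revert w; induction phi as [| x | a IHa b IHb | a IHa b IHb | a IHa b IHb | a IHa];
    intro w; simpl; try tauto.
  - rewrite IHa, IHb; tauto.
  - rewrite IHa, IHb; tauto.
  - split; intros H w' Hww'; specialize (H w' Hww'); rewrite IHa, IHb in *; exact H.
  - apply IHa.
Qed.

End UpsetAlgebra.

Theorem theorem5p3 (F : L5Frame) (g : var -> fW F -> Prop)
  (Hg : assignment F g) (wT : fW F) (HwT : R_maximal F wT) :
  exists (Mo : L5Model) (gamma : var -> M Mo),
    forall phi : form, msat Mo gamma phi <-> ksat F g wT phi.
Proof.
  exists (upset_model F wT HwT), (upset_val F g Hg).
  intro phi; exact (upset_model_truth F wT HwT g Hg phi wT).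
Qed.
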